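(* Let $X$ be a real Banach space with the almost Daugavet property. Then every convex combination of $w^*$-slices in $B_{X^*}$ has diameter $2$.
   Context: For a subspace $Y\subseteq X^*$, $X$ has the Daugavet property with respect to $Y$ if $\|I+T\|=1+\|T\|$ for every rank-one operator $T=x\otimes y^*:X\to X$ (i.e. $T(z)=y^*(z)x$) with $x\in X$ and $y^*\in Y$. A subspace $Y\subseteq X^*$ is norming if $\|x\|=\sup\{|y^*(x)|: y^*\in Y,\|y^*\|\le1\}$ for all $x\in X$. $X$ has the almost Daugavet property if it has the Daugavet property with respect to some norming subspace of $X^*$. A $w^*$-slice of $B_{X^*}$ is $S(B_{X^*},x,\alpha)=\{f\in B_{X^*}:f(x)>1-\alpha\}$ with $x\in S_X$, $0<\alpha<1$; a convex combination of $w^*$-slices is a Minkowski sum $\sum_{i=1}^n\lambda_iS_i$ of $w^*$-slices $S_i$ with $\lambda_i>0$, $\sum_i\lambda_i=1$. *)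

From HB Require Import structures.
From mathcomp Require Import all_boot all_order all_algebra.
From mathcomp Require Import all_classical all_reals all_analysis.
Set Implicit Arguments. Unset Strict Implicit. Unset Printing Implicit Defensive.
Import Order.TTheory GRing.Theory Num.Theory.
Import numFieldNormedType.Exports.
Local Open Scope classical_set_scope.
Local Open Scope ring_scope.

Section Dual.
Variables (R : realType) (X : normedModType R).

Definition unit_ballX : set X := [set x | `|x| <= 1].

(* X^* : bounded (= continuous) linear functionals, as functions X -> R *)
Definition is_linear_functional (f : X -> R) : Prop :=
  forall (a : R) (x y : X), f (a *: x + y) = a * f x + f y.
Definition is_bounded_functional (f : X -> R) : Prop :=
  exists C : R, forall x : X, `|f x| <= C * `|x|.
Definition dual_space : set (X -> R) :=
  [set f | is_linear_functional f /\ is_bounded_functional f].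

Definition dnorm (f : X -> R) : R := sup [set `|f x| | x in unit_ballX].

Definition opnorm (g : X -> X) : R := sup [set `|g x| | x in unit_ballX].

Definition dual_ball : set (X -> R) := [set f | dual_space f /\ dnorm f <= 1].

Definition dual_subspace (Y : set (X -> R)) : Prop :=
  Y `<=` dual_space /\ Y (fun _ => 0) /\
  forall (a : R) (f g : X -> R), Y f -> Y g -> Y (fun z => a * f z + g z).

Definition norming (Y : set (X -> R)) : Prop :=
  forall x : X, `|x| = sup [set `|y x| | y in [set y | Y y /\ dnorm y <= 1]].

(* Daugavet property w.r.t. Y : ||I + x (x) y*|| = 1 + ||x (x) y*|| *)
Definition daugavet_wrt (Y : set (X -> R)) : Prop :=
  forall (x : X) (y : X -> R), Y y ->
    opnorm (fun z => z + y z *: x) = 1 + opnorm (fun z => y z *: x).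

Definition almost_daugavet : Prop :=
  exists Y : set (X -> R), dual_subspace Y /\ norming Y /\ daugavet_wrt Y.

Definition wslice (x : X) (alpha : R) : set (X -> R) :=
  [set f | dual_ball f /\ f x > 1 - alpha].

Definition conv_slices (n : nat) (lam : 'I_n -> R) (x : 'I_n -> X)
    (alpha : 'I_n -> R) : set (X -> R) :=
  [set f | exists fs : 'I_n -> X -> R,
      (forall i, wslice (x i) (alpha i) (fs i)) /\
      f = (fun z => \sum_(i < n) lam i * fs i z)].

Definition dual_diam (C : set (X -> R)) : R :=
  sup [set dnorm (fun z => f z - g z) | f in C & g in C].

End Dual.

From HB Require Import structures.
From mathcomp Require Import all_boot all_order all_algebra.
From mathcomp Require Import all_classical all_reals all_analysis.
From mathcomp Require Import lra.
Import Order.TTheory GRing.Theory Num.Theory.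
Import numFieldNormedType.Exports.
Local Open Scope classical_set_scope.
Local Open Scope ring_scope.
Set Implicit Arguments. Unset Strict Implicit.

(* For a
   unit vector w and a functional h in Y, the equality ||I + h (x) w|| = 2 ||h||
   yields points z of B_X almost maximising h with ||w + z|| close to 2; norming
   w + z by some g in Y, the slice of B_X cut by h + g lies in the old slice and
   consists of points v with ||w + v|| close to 2.  Iterating over the vectors
   +-x_i gives u in B_X with ||x_i + u|| and ||x_i - u|| close to 2 for all i.
   Norming x_i + u and x_i - u by elements of Y produces f_i and g_i in the
   slices S(B_X*, x_i, alpha_i) with f_i(u) close to 1 and g_i(u) close to -1,
   so the combinations sum lam_i f_i and sum lam_i g_i differ by almost 2 at u. *)

Section DualNorm.
Variables (R : realType) (X : normedModType R).
Implicit Types (f h : X -> R) (x w : X).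

Lemma lfun0 f : is_linear_functional f -> f 0 = 0.
Proof. by move=> L; have := L 1 0 0; rewrite scale1r addr0 mul1r; lra. Qed.

Lemma lfunD f x y : is_linear_functional f -> f (x + y) = f x + f y.
Proof. by move=> L; rewrite -[x in LHS]scale1r L mul1r. Qed.

Lemma lfunZ f a x : is_linear_functional f -> f (a *: x) = a * f x.
Proof. by move=> L; have := L a x 0; rewrite lfun0 // !addr0. Qed.

Lemma lfunN f x : is_linear_functional f -> f (- x) = - f x.
Proof. by move=> L; rewrite -scaleN1r lfunZ // mulN1r. Qed.

Lemma unit_ballX0 : @unit_ballX R X 0.
Proof. by rewrite /unit_ballX /= normr0. Qed.

Lemma dnorm_le_ub f M : (forall x, `|x| <= 1 -> `|f x| <= M) -> dnorm f <= M.
Proof.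
move=> fM; apply: ge_sup; first by exists `|f 0|, 0 => //; exact: unit_ballX0.
by move=> _ [x xb <-]; exact: fM.
Qed.

Lemma abs_le_dnorm f x : is_bounded_functional f -> `|x| <= 1 -> `|f x| <= dnorm f.
Proof.
case=> C fC xb; apply: sup_upper_bound; last by exists x.
split; first by exists `|f 0|, 0 => //; exact: unit_ballX0.
exists `|C| => _ [z zb <-]; apply: le_trans (fC z) _.
by apply: le_trans (ler_norm _) _; rewrite normrM normr_id ler_piMr.
Qed.

Lemma dnorm_bounded_ge0 f : is_bounded_functional f -> 0 <= dnorm f.
Proof.
move=> B; apply: le_trans (abs_le_dnorm (x := 0) B _) => //; by rewrite normr0.
Qed.

Lemma abs_le_dnormM f x : dual_space f -> `|f x| <= dnorm f * `|x|.
Proof.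
case=> L B; have [->|x0] := eqVneq x 0; first by rewrite lfun0 // !normr0 mulr0.
have nx : 0 < `|x| by rewrite normr_gt0.
have := abs_le_dnorm B (x := `|x|^-1 *: x).
rewrite normrZ normfV normr_id mulVf ?gt_eqF // lfunZ // normrM normfV normr_id.
by rewrite ler_pdivrMl // mulrC => /(_ (lexx _)).
Qed.

Lemma dnorm0 : dnorm (fun _ : X => 0) = 0.
Proof.
apply/eqP; rewrite eq_le dnorm_bounded_ge0 ?andbT; last by exists 0 => z; rewrite normr0 mul0r.
by apply: dnorm_le_ub => x _; rewrite normr0.
Qed.

Lemma dnorm_scale_le f a : is_bounded_functional f ->
  dnorm (fun z => a * f z) <= `|a| * dnorm f.
Proof.
by move=> B; apply: dnorm_le_ub => x xb; rewrite normrM ler_wpM2l ?abs_le_dnorm.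
Qed.

Lemma dnorm_scale f a : is_bounded_functional f ->
  dnorm (fun z => a * f z) = `|a| * dnorm f.
Proof.
move=> B; apply/eqP; rewrite eq_le dnorm_scale_le //=.
have [->|a0] := eqVneq a 0.
  by rewrite normr0 mul0r dnorm_bounded_ge0 //; exists 0 => z; rewrite mul0r normr0 mul0r.
have Ba : is_bounded_functional (fun z => a * f z).
  by case: B => C BC; exists (`|a| * C) => z; rewrite normrM -mulrA ler_wpM2l.
have := dnorm_scale_le a^-1 Ba.
have -> : (fun z => a^-1 * (a * f z)) = f by apply: funext => z; rewrite mulKf.
by rewrite normfV -ler_pdivlMl ?normr_gt0.
Qed.

Lemma opnorm_rank_one h w : `|w| = 1 -> opnorm (fun z => h z *: w) = dnorm h.
Proof.
by move=> w1; rewrite /opnorm /dnorm; congr sup; congr image; apply: funext => z;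
  rewrite normrZ w1 mulr1.
Qed.

End DualNorm.

Section AlmostDaugavet.
Variables (R : realType) (X : normedModType R) (Y : set (X -> R)).
Hypothesis Ysub : dual_subspace Y.
Implicit Types (f g h : X -> R) (u v w x z : X).

Lemma Y_dual f : Y f -> dual_space f.
Proof. by case: Ysub => sY _; exact: sY. Qed.

Lemma Y_zero : Y (fun _ => 0).
Proof. by case: Ysub => _ []. Qed.

Lemma Y_comb a f g : Y f -> Y g -> Y (fun z => a * f z + g z).
Proof. by case: Ysub => _ [_]; exact. Qed.

Lemma Y_scale a f : Y f -> Y (fun z => a * f z).
Proof.
move=> Yf; have := Y_comb a Yf Y_zero.
by congr Y; apply: funext => z; rewrite addr0.
Qed.

Lemma Y_add f g : Y f -> Y g -> Y (fun z => f z + g z).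
Proof.
move=> Yf Yg; have := Y_comb 1 Yf Yg.
by congr Y; apply: funext => z; rewrite mul1r.
Qed.

Lemma Y_le_dnorm f u : Y f -> `|u| <= 1 -> f u <= dnorm f.
Proof. by case/Y_dual=> _ B ub; apply: le_trans (ler_norm _) (abs_le_dnorm B ub). Qed.

Lemma Y_le1 f u : Y f -> dnorm f <= 1 -> `|u| <= 1 -> f u <= 1.
Proof. by move=> Yf f1 ub; apply: le_trans (Y_le_dnorm Yf ub) f1. Qed.

Hypothesis Ynorming : norming Y.

Lemma norming_witness x e : 0 < e ->
  exists g, [/\ Y g, dnorm g <= 1 & `|x| - e < g x].
Proof.
move=> e0.
have hs : has_sup [set `|g x| | g in [set g | Y g /\ dnorm g <= 1]].
  split.
    by exists `|0 : R|, (fun _ => 0) => //; split; [exact: Y_zero | rewrite dnorm0].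
  exists `|x| => _ [g [Yg g1] <-]; apply: le_trans (abs_le_dnormM x (Y_dual Yg)) _.
  by rewrite ler_piMl.
have [_ [g [Yg g1] <-]] := sup_adherent e0 hs; rewrite -Ynorming => gx.
have [gx0|gx0] := leP 0 (g x); first by exists g; rewrite -(ger0_norm gx0).
exists (fun z => -1 * g z); split; first exact: Y_scale.
  by case: (Y_dual Yg) => _ B; rewrite (dnorm_scale (-1) B) normrN1 mul1r.
by rewrite mulN1r -(ltr0_norm gx0).
Qed.

Lemma norming_dual_ball x u d : `|x| <= 1 -> `|u| <= 1 -> 0 < d -> 2 - d < `|x + u| ->
  exists f, [/\ dual_ball f, 1 - 2 * d < f x & 1 - 2 * d < f u].
Proof.
move=> xb ub d0 xu.
have [f [Yf f1 fxu]] := norming_witness (x + u) d0.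
have [Lf Bf] := Y_dual Yf; rewrite (lfunD x u Lf) in fxu.
have := Y_le1 Yf f1 xb; have := Y_le1 Yf f1 ub => fu1 fx1.
by exists f; split; [split; first exact: Y_dual | lra | lra].
Qed.

Hypothesis Ydaugavet : daugavet_wrt Y.

(* ||I + h (x) w|| = 2 gives z in B_X with ||z + h(z) w|| close to 2, and the
   two triangle inequalities through z and through w + z then force h(z) and
   ||w + z|| / 2 close to 1. *)
Lemma daugavet_unit h w e : Y h -> dnorm h = 1 -> `|w| = 1 -> 0 < e ->
  exists z, [/\ `|z| <= 1, 1 - e < h z & 2 - e < `|w + z|].
Proof.
move=> Yh h1 w1 e0; have [L B] := Y_dual Yh.
have op2 := Ydaugavet w Yh; rewrite opnorm_rank_one // h1 /opnorm in op2.
have hs : has_sup [set `|z + h z *: w| | z in @unit_ballX R X].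
  split; first by exists `|0 + h 0 *: w|, 0 => //; exact: unit_ballX0.
  exists 2 => _ [z zb <-]; apply: le_trans (ler_normD _ _) _.
  by rewrite normrZ w1 mulr1; have := abs_le_dnorm B zb; rewrite h1 /unit_ballX /= in zb *; lra.
have e2 : 0 < e / 2 by lra.
have [_ [z0 z0b <-]] := sup_adherent e2 hs; rewrite op2 => Hz0.
have [z [zb hz0 Hz]] : exists z, [/\ `|z| <= 1, 0 <= h z & 2 - e / 2 < `|z + h z *: w|].
  have [|hz0] := leP 0 (h z0); first by exists z0; split=> //; lra.
  exists (- z0); rewrite normrN lfunN // scaleNr -opprD normrN.
  by split=> //; lra.
have hz1 : h z <= 1 by have := abs_le_dnorm B zb; rewrite h1 ger0_norm.
have t1 : `|z + h z *: w| <= `|z| + h z.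
  by apply: le_trans (ler_normD _ _) _; rewrite normrZ w1 mulr1 ger0_norm.
have t2 : `|z + h z *: w| <= `|w + z| + (1 - h z).
  have -> : z + h z *: w = (w + z) - (1 - h z) *: w.
    by rewrite scalerBl scale1r opprB addrCA [w + z]addrC addrK addrC.
  by apply: le_trans (ler_normB _ _) _; rewrite normrZ w1 mulr1 ger0_norm // subr_ge0.
by exists z; split=> //; lra.
Qed.

Lemma daugavet_witness h w k : Y h -> `|w| = 1 -> 0 < k ->
  exists z, [/\ `|z| <= 1, dnorm h - k < h z & 2 - k < `|w + z|].
Proof.
move=> Yh w1 k0; have [L B] := Y_dual Yh.
have s0 := dnorm_bounded_ge0 B; set s := dnorm h in s0 *.
have w2 : `|w + w| = 2 by rewrite -mulr2n normrMn w1.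
have [s00|sp] := eqVneq s 0.
  have hw0 : h w = 0.
    by apply/eqP; rewrite -normr_eq0 eq_le normr_ge0 -s00 andbT abs_le_dnorm ?w1.
  by exists w; split; rewrite ?w1 ?hw0 ?w2 //; lra.
have {sp}sp : 0 < s by rewrite lt_def sp s0.
have h'1 : dnorm (fun z => s^-1 * h z) = 1.
  by rewrite dnorm_scale // normfV gtr0_norm // mulVf ?gt_eqF.
have e0 : 0 < k / (s + 1) by rewrite divr_gt0 //; lra.
have [z [zb hz wz]] := daugavet_unit (Y_scale s^-1 Yh) h'1 w1 e0.
have ek : k / (s + 1) < k by rewrite ltr_pdivrMr; [nra | lra].
have sek : s * (k / (s + 1)) <= k.
  by rewrite mulrA ler_pdivrMr; [nra | lra].
exists z; split=> //; last by lra.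
have -> : h z = s * (s^-1 * h z) by rewrite mulrA mulfV ?gt_eqF ?mul1r.
have : s * (1 - k / (s + 1)) < s * (s^-1 * h z) by rewrite ltr_pM2l.
lra.
Qed.

Definition ball_slice h c : set X := [set v | `|v| <= 1 /\ c < h v].

(* The new slice is cut by h + g, where g norms w + z for a point z produced
   by the Daugavet property deep inside the old slice. *)
Lemma ball_slice_shrink h c w d : Y h -> ball_slice h c !=set0 -> `|w| = 1 -> 0 < d ->
  exists h' c', [/\ Y h', ball_slice h' c' !=set0 &
    ball_slice h' c' `<=` ball_slice h c `&` [set v | 2 - d < `|w + v|]].
Proof.
move=> Yh [z0 [z0b hz0]] w1 d0.
have z0s : h z0 <= dnorm h := Y_le_dnorm Yh z0b.
set k := Num.min ((h z0 - c) / 3) (d / 6).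
have [k1 k2] : k <= (h z0 - c) / 3 /\ k <= d / 6 by split; rewrite ge_min lexx ?orbT.
have k0 : 0 < k by rewrite lt_min; apply/andP; split; lra.
have [z [zb hz wz]] := daugavet_witness Yh w1 k0.
have [g [Yg g1 gwz]] := norming_witness (w + z) k0.
have [Lg Bg] := Y_dual Yg; rewrite (lfunD w z Lg) in gwz.
have gz1 := Y_le1 Yg g1 zb.
have gw1 : g w <= 1 by apply: Y_le1; rewrite ?w1.
set c' := Num.max (c + 1) (dnorm h + 1 - d / 2).
have [c'1 c'2] : c + 1 <= c' /\ dnorm h + 1 - d / 2 <= c' by split; rewrite le_max lexx ?orbT.
exists (fun v => h v + g v), c'; split; first exact: Y_add.
  by exists z; split=> //; rewrite /c' gt_max; apply/andP; split; lra.
move=> v [vb /= hgv]; have hvs := Y_le_dnorm Yh vb; have gv1 := Y_le1 Yg g1 vb.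
split; first by split=> //; lra.
have : g (w + v) <= `|w + v|.
  apply: le_trans (ler_norm _) _; apply: le_trans (abs_le_dnormM _ (Y_dual Yg)) _.
  by rewrite ler_piMl.
rewrite /= (lfunD w v Lg); lra.
Qed.

Lemma ball_slice_far_point h c (ws : seq X) d : Y h -> ball_slice h c !=set0 ->
  {in ws, forall w, `|w| = 1} -> 0 < d ->
  exists2 u, ball_slice h c u & {in ws, forall w, 2 - d < `|w + u|}.
Proof.
elim: ws h c => [|w ws IH] h c Yh hc ws1 d0.
  by case: hc => u hu; exists u.
have [h' [c' [Yh' hc' sub]]] := ball_slice_shrink Yh hc (ws1 w (mem_head _ _)) d0.
have [u /sub [hu wu] wsu] : exists2 u, ball_slice h' c' u & {in ws, forall w, 2 - d < `|w + u|}.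
  by apply: IH => // w' w'ws; apply: ws1; rewrite in_cons w'ws orbT.
by exists u => // w'; rewrite in_cons => /predU1P [->|]; [exact: wu | exact: wsu].
Qed.

Lemma far_point (ws : seq X) d : {in ws, forall w, `|w| = 1} -> 0 < d ->
  exists2 u, `|u| <= 1 & {in ws, forall w, 2 - d < `|w + u|}.
Proof.
move=> ws1 d0.
have hc : ball_slice (fun _ => 0) (-1) !=set0.
  by exists 0; split; rewrite ?normr0 //; lra.
by have [u [ub _]] := ball_slice_far_point Y_zero hc ws1 d0; exists u.
Qed.

End AlmostDaugavet.

Lemma sup_eq_approx (R : realType) (S : set R) M :
  (forall s, S s -> s <= M) -> (forall e, 0 < e -> exists2 s, S s & M - e <= s) ->
  sup S = M.
Proof.
move=> SM Sapprox; have [s0 S0 _] := Sapprox 1 ltr01.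
apply/eqP; rewrite eq_le ge_sup /=; [|by exists s0|by []].
apply/ler_addgt0Pr => e e0; have [s Ss es] := Sapprox e e0.
have : s <= sup S by apply: sup_upper_bound => //; split; [exists s | exists M].
lra.
Qed.

Section ConvexSlices.
Variables (R : realType) (X : normedModType R) (n : nat) (lam : 'I_n -> R).
Variables (x : 'I_n -> X) (alpha : 'I_n -> R).
Hypotheses (lam_gt0 : forall i, 0 < lam i) (lam_sum1 : \sum_(i < n) lam i = 1).
Local Notation C := (conv_slices lam x alpha).

Lemma conv_comb_abs_le (fs : 'I_n -> X -> R) z : (forall i, dual_ball (fs i)) ->
  `|\sum_(i < n) lam i * fs i z| <= `|z|.
Proof.
move=> fs1; apply: le_trans (ler_norm_sum _ _ _) _.
rewrite -[leRHS]mul1r -lam_sum1 mulr_suml; apply: ler_sum => i _.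
rewrite normrM gtr0_norm //; apply: ler_wpM2l; first exact: ltW.
have [fi dfi] := fs1 i; apply: le_trans (abs_le_dnormM z fi) _.
by rewrite ler_piMl.
Qed.

Lemma conv_comb_diff_ge (fs gs : 'I_n -> X -> R) z a :
  (forall i, a <= fs i z - gs i z) ->
  a <= \sum_(i < n) lam i * fs i z - \sum_(i < n) lam i * gs i z.
Proof.
move=> fgs; rewrite -sumrB -[a]mul1r -lam_sum1 mulr_suml; apply: ler_sum => i _.
by rewrite -mulrBr; apply: ler_wpM2l; [exact: ltW | exact: fgs].
Qed.

Lemma conv_slices_diff_le f g z : C f -> C g -> `|f z - g z| <= 2 * `|z|.
Proof.
move=> [fs [fsS ->]] [gs [gsS ->]]; apply: le_trans (ler_normB _ _) _.
have := conv_comb_abs_le z (fun i => (fsS i).1).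
have := conv_comb_abs_le z (fun i => (gsS i).1); lra.
Qed.

Lemma dnorm_conv_slices_diff_le f g : C f -> C g -> dnorm (fun z => f z - g z) <= 2.
Proof.
move=> Cf Cg; apply: dnorm_le_ub => z zb.
by apply: le_trans (conv_slices_diff_le z Cf Cg) _; lra.
Qed.

Hypotheses (x1 : forall i, `|x i| = 1) (alpha01 : forall i, 0 < alpha i < 1).

Lemma conv_slices_diam_approx e : almost_daugavet X -> 0 < e ->
  exists f g, [/\ C f, C g & 2 - e <= dnorm (fun z => f z - g z)].
Proof.
move=> [Y [Ysub [Ynorming Ydaugavet]]] e0.
set m := \big[Num.min/1]_(i < n) alpha i.
have m0 : 0 < m by apply: lt_bigmin => // i _; case/andP: (alpha01 i).
have malpha i : m <= alpha i by apply: bigmin_le.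
set d := Num.min (e / 4) (m / 2).
have [de dm] : d <= e / 4 /\ d <= m / 2 by split; rewrite ge_min lexx ?orbT.
have d0 : 0 < d by rewrite lt_min; apply/andP; split; lra.
set ws := [seq x i | i <- enum 'I_n] ++ [seq - x i | i <- enum 'I_n].
have ws1 : {in ws, forall w, `|w| = 1}.
  by move=> w; rewrite mem_cat => /orP [] /mapP [i _ ->]; rewrite ?normrN x1.
have [u ub uws] := far_point Ysub Ynorming Ydaugavet ws1 d0.
have xb i : `|x i| <= 1 by rewrite x1.
have fs_ex i : exists f, [/\ dual_ball f, 1 - 2 * d < f (x i) & 1 - 2 * d < f u].
  apply: (norming_dual_ball Ysub Ynorming) => //; apply: uws.
  by rewrite mem_cat map_f ?mem_enum.
have gs_ex i : exists g, [/\ dual_ball g, 1 - 2 * d < g (x i) & 1 - 2 * d < g (- u)].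
  apply: (norming_dual_ball Ysub Ynorming); rewrite ?normrN //.
  rewrite -normrN opprB [u - _]addrC; apply: uws.
  by rewrite mem_cat [_ \in [seq - x j | j <- _]]map_f ?mem_enum ?orbT.
have [fs fsP] := choice fs_ex; have [gs gsP] := choice gs_ex.
set F := fun z => \sum_(i < n) lam i * fs i z.
set G := fun z => \sum_(i < n) lam i * gs i z.
have CF : C F.
  exists fs; split=> // i; have [fi fxi _] := fsP i; split=> //.
  by have := malpha i; lra.
have CG : C G.
  exists gs; split=> // i; have [gi gxi _] := gsP i; split=> //.
  by have := malpha i; lra.
exists F, G; split=> //.
have FGu : 2 - 4 * d <= F u - G u.
  apply: conv_comb_diff_ge => i; have [_ _ fu] := fsP i.
  have [[[Lg _] _] _ gu] := gsP i; rewrite (lfunN u Lg) in gu; lra.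
have : `|F u - G u| <= dnorm (fun z => F z - G z).
  apply: abs_le_dnorm ub; exists 2 => z; exact: conv_slices_diff_le.
have := ler_norm (F u - G u); lra.
Qed.

End ConvexSlices.

Theorem mainTheorem3 (R : realType) (X : completeNormedModType R) :
  almost_daugavet X ->
  forall (n : nat) (lam : 'I_n -> R) (x : 'I_n -> X) (alpha : 'I_n -> R),
    (forall i, `|x i| = 1) ->
    (forall i, 0 < alpha i < 1) ->
    (forall i, 0 < lam i) ->
    \sum_(i < n) lam i = 1 ->
    dual_diam (conv_slices lam x alpha) = 2.
Proof.
move=> adX n lam x alpha x1 alpha01 lam_gt0 lam_sum1; apply: sup_eq_approx.
  by move=> _ [f Cf [g Cg <-]]; exact: (dnorm_conv_slices_diff_le lam_gt0 lam_sum1 Cf Cg).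
move=> e e0; have [f [g [Cf Cg fg]]] := conv_slices_diam_approx lam_gt0 lam_sum1 x1 alpha01 adX e0.
by exists (dnorm (fun z => f z - g z)) => //; exists f => //; exists g.
Qed.
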